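(* Let $\mathcal G$ be a finitely generated almost simple group which contains a distortion element, and let $\mathcal H$ be a normal subgroup of $\mathcal G$. Then every homomorphism $\psi:\mathcal H\to\mathbb R$ is trivial.
   Context: A group is almost simple if every normal subgroup is finite or has finite index. For a finitely generated group with finite generating set, $u$ is a distortion element if it has infinite order and $\liminf_{n\to\infty}|u^n|/n=0$, $|\cdot|$ the word length. *)

From Stdlib Require Import Reals List Arith.
Import ListNotations.
Open Scope R_scope.
Set Implicit Arguments.
Unset Strict Implicit.

Section GroupDefs.
Variables (G : Type) (mul : G -> G -> G) (e : G) (inv : G -> G).

Record is_group : Prop := {
  mul_assoc : forall x y z, mul x (mul y z) = mul (mul x y) z;
  mul_1l : forall x, mul e x = x;
  mul_1r : forall x, mul x e = x;
  mul_Vl : forall x, mul (inv x) x = e;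
  mul_Vr : forall x, mul x (inv x) = e }.

Definition gpow (u : G) (n : nat) : G := Nat.iter n (mul u) e.

Definition is_word (S : list G) (w : list G) : Prop :=
  Forall (fun a => In a S \/ In (inv a) S) w.

Definition eval_word (w : list G) : G := fold_right mul e w.

Definition generates (S : list G) : Prop :=
  forall g, exists w, is_word S w /\ eval_word w = g.

Definition word_length_is (S : list G) (g : G) (n : nat) : Prop :=
  (exists w, is_word S w /\ eval_word w = g /\ length w = n) /\
  (forall w, is_word S w -> eval_word w = g -> (n <= length w)%nat).

Definition infinite_order (u : G) : Prop :=
  forall n, (0 < n)%nat -> gpow u n <> e.

(** u is a distortion element w.r.t. S : infinite order and
    liminf_{n->oo} |u^n|_S / n = 0 (for a nonnegative sequence this
    means: for every eps > 0 and every N there is n >= N with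
    |u^n|_S / n < eps). *)
Definition distortion_element (S : list G) (u : G) : Prop :=
  infinite_order u /\
  forall eps : R, 0 < eps -> forall N : nat, exists n : nat, exists l : nat,
    (N <= n)%nat /\ (0 < n)%nat /\ word_length_is S (gpow u n) l /\
    INR l / INR n < eps.

Definition normal_subgroup (H : G -> Prop) : Prop :=
  H e /\ (forall x y, H x -> H y -> H (mul x y)) /\
  (forall x, H x -> H (inv x)) /\
  (forall g h, H h -> H (mul (mul g h) (inv g))).

Definition finite_subset (H : G -> Prop) : Prop :=
  exists l : list G, forall x, H x -> In x l.

Definition finite_index (H : G -> Prop) : Prop :=
  exists l : list G, forall g, exists t h, In t l /\ H h /\ g = mul t h.

Definition almost_simple : Prop :=
  forall N, normal_subgroup N -> finite_subset N \/ finite_index N.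

(** psi : H -> (R,+) is a homomorphism (psi given as a function on G,
    only its values on H matter). *)
Definition hom_to_R (H : G -> Prop) (psi : G -> R) : Prop :=
  forall x y, H x -> H y -> psi (mul x y) = psi x + psi y.

End GroupDefs.

From Stdlib Require Import Reals List Lia Lra ClassicalEpsilon.
Open Scope R_scope.
Set Implicit Arguments.
Unset Strict Implicit.

(* On a finite-index subgroup H, a homomorphism psi : H -> R grows at most
   linearly in the word length of G (decompose along a finite transversal of
   H), so psi vanishes on every element of H that is distorted in G.
   If H is finite, it is torsion and psi vanishes. Otherwise H has finite
   index; let K be the set of h in H with psi (g h g^-1) = 0 for all g, a
   normal subgroup of G. Some power v = u^k lies in H, and v and all its
   conjugates are distorted, so v lies in K; v has infinite order, hence K is
   infinite and has finite index, and every x in H has a power in K, so that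
   psi x = 0. *)

Lemma pigeonhole_nat (X : Type) (f : nat -> X) (l : list X) :
  (forall n, In (f n) l) -> exists i j, (i < j)%nat /\ f i = f j.
Proof.
  intros Hf. apply NNPP; intros Hno.
  set (L := map f (seq 0 (S (length l)))).
  assert (HL : NoDup L).
  { apply (proj2 (NoDup_nth L (f 0%nat))).
    intros i j Hi Hj Heq. unfold L in *. rewrite length_map, length_seq in Hi, Hj.
    rewrite !map_nth, !seq_nth in Heq by lia. simpl in Heq.
    destruct (Nat.lt_trichotomy i j) as [h|[h|h]]; auto;
      exfalso; apply Hno; eauto. }
  assert (Hincl : incl L l).
  { intros x Hx. unfold L in Hx. apply in_map_iff in Hx. destruct Hx as [n [<- _]]. auto. }
  pose proof (NoDup_incl_length HL Hincl) as Hlen. unfold L in Hlen.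
  rewrite length_map, length_seq in Hlen. lia.
Qed.

Lemma list_upper_bound (X : Type) (f : X -> R) (l : list X) :
  exists B, 0 <= B /\ forall x, In x l -> f x <= B.
Proof.
  induction l as [|a l [B [HB0 HB]]].
  - exists 0. split; [lra | intros x []].
  - exists (Rmax (f a) B). split.
    + apply Rle_trans with B; [exact HB0 | apply Rmax_r].
    + intros x [<- | Hx]; [apply Rmax_l |].
      apply Rle_trans with B; [auto | apply Rmax_r].
Qed.

Section Group.

Variables (G : Type) (mul : G -> G -> G) (e : G) (inv : G -> G).
Hypothesis Hgrp : is_group mul e inv.

Local Infix "·" := mul (at level 40, left associativity).
Local Notation "x ^+ n" := (gpow mul e x n) (at level 30, right associativity).

Let mulA := mul_assoc Hgrp.
Let mul1g := mul_1l Hgrp.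
Let mulg1 := mul_1r Hgrp.
Let mulVg := mul_Vl Hgrp.
Let mulgV := mul_Vr Hgrp.

Lemma mulKg x y : inv x · (x · y) = y.
Proof. now rewrite mulA, mulVg, mul1g. Qed.

Lemma mulKVg x y : x · (inv x · y) = y.
Proof. now rewrite mulA, mulgV, mul1g. Qed.

Lemma inv_unique x y : x · y = e -> y = inv x.
Proof. intros Hxy. now rewrite <- (mulKg x y), Hxy, mulg1. Qed.

Lemma invMg x y : inv (x · y) = inv y · inv x.
Proof. symmetry; apply inv_unique. rewrite <- mulA, mulKVg. apply mulgV. Qed.

Lemma invgK x : inv (inv x) = x.
Proof. symmetry; apply inv_unique, mulVg. Qed.

Lemma invg1 : inv e = e.
Proof. symmetry; apply inv_unique, mul1g. Qed.

Lemma conjMg g x y : g · (x · y) · inv g = g · x · inv g · (g · y · inv g).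
Proof. now rewrite <- !mulA, mulKg. Qed.

Lemma conjVg g x : g · inv x · inv g = inv (g · x · inv g).
Proof. now rewrite !invMg, invgK, mulA. Qed.

Lemma conjgJ g' g h : g' · (g · h · inv g) · inv g' = g' · g · h · inv (g' · g).
Proof. now rewrite invMg, !mulA. Qed.

Lemma gpowS x n : x ^+ S n = x · x ^+ n.
Proof. reflexivity. Qed.

Lemma gpowD x n m : x ^+ (n + m) = x ^+ n · x ^+ m.
Proof.
  induction n as [|n IH]; [symmetry; apply mul1g |].
  now rewrite Nat.add_succ_l, !gpowS, IH, mulA.
Qed.

Lemma gpowM x m n : x ^+ (m * n) = (x ^+ n) ^+ m.
Proof.
  induction m as [|m IH]; [reflexivity |].
  now rewrite Nat.mul_succ_l, Nat.add_comm, gpowD, IH.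
Qed.

Lemma gpow_sub x i j : (i <= j)%nat -> x ^+ (j - i) = inv (x ^+ i) · x ^+ j.
Proof.
  intros Hij. replace (x ^+ j) with (x ^+ i · x ^+ (j - i)).
  - now rewrite mulKg.
  - rewrite <- gpowD. f_equal. lia.
Qed.

Lemma conjXg g x n : (g · x · inv g) ^+ n = g · x ^+ n · inv g.
Proof.
  induction n as [|n IH]; [now rewrite mulg1, mulgV |].
  now rewrite !gpowS, IH, <- !mulA, mulKg.
Qed.

Record subgroup (H : G -> Prop) : Prop := {
  subgroup1 : H e;
  subgroupM : forall x y, H x -> H y -> H (x · y);
  subgroupV : forall x, H x -> H (inv x) }.

Lemma normal_subgroup_subgroup H : normal_subgroup mul e inv H -> subgroup H.
Proof. intros [H1 [HM [HV _]]]. now constructor. Qed.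

Lemma subgroupX H x n : subgroup H -> H x -> H (x ^+ n).
Proof.
  intros HH Hx. induction n as [|n IH]; [apply HH |].
  rewrite gpowS. now apply HH.
Qed.

Lemma finite_subgroup_torsion H x :
  subgroup H -> finite_subset H -> H x -> exists m, (0 < m)%nat /\ x ^+ m = e.
Proof.
  intros HH [l Hl] Hx.
  destruct (pigeonhole_nat (f := gpow mul e x) (l := l)) as [i [j [Hij Eij]]].
  { intros n. apply Hl, subgroupX; auto. }
  exists (j - i)%nat. split; [lia |].
  rewrite gpow_sub, <- Eij by lia. apply mulVg.
Qed.

Lemma finite_index_transversal H :
  finite_index mul H -> exists l (rep comp : G -> G),
    forall g, In (rep g) l /\ H (comp g) /\ g = rep g · comp g.
Proof.
  intros [l Hl].
  destruct (choice (fun g p => In (fst p) l /\ H (snd p) /\ g = fst p · snd p))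
    as [f Hf].
  { intros g. destruct (Hl g) as [t [h Hth]]. now exists (t, h). }
  now exists l, (fun g => fst (f g)), (fun g => snd (f g)).
Qed.

Lemma finite_index_gpow H x :
  subgroup H -> finite_index mul H -> exists m, (0 < m)%nat /\ H (x ^+ m).
Proof.
  intros HH Hfi. destruct (finite_index_transversal Hfi) as [l [rep [comp Hdec]]].
  destruct (pigeonhole_nat (f := fun n => rep (x ^+ n)) (l := l)) as [i [j [Hij Eij]]].
  { intros n. apply Hdec. }
  exists (j - i)%nat. split; [lia |].
  destruct (Hdec (x ^+ i)) as [_ [Hci Ei]], (Hdec (x ^+ j)) as [_ [Hcj Ej]].
  rewrite gpow_sub by lia. rewrite Ei, Ej, Eij, invMg, <- mulA, mulKg.
  now apply HH; [apply HH |].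
Qed.

Definition conj_kernel (H : G -> Prop) (psi : G -> R) (h : G) : Prop :=
  H h /\ forall g, psi (g · h · inv g) = 0.

Section Hom.

Variables (H : G -> Prop) (psi : G -> R).
Hypotheses (HH : subgroup H) (Hpsi : hom_to_R mul H psi).

Lemma hom1 : psi e = 0.
Proof.
  pose proof (Hpsi (subgroup1 HH) (subgroup1 HH)) as E. rewrite mul1g in E. lra.
Qed.

Lemma homV x : H x -> psi (inv x) = - psi x.
Proof.
  intros Hx. pose proof (Hpsi (subgroupV HH Hx) Hx) as E.
  rewrite mulVg, hom1 in E. lra.
Qed.

Lemma homX x n : H x -> psi (x ^+ n) = INR n * psi x.
Proof.
  intros Hx. induction n as [|n IH]; [simpl; rewrite hom1; ring |].
  rewrite gpowS, Hpsi, IH, S_INR by (auto; now apply subgroupX). ring.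
Qed.

Lemma homX_eq0 x m : H x -> (0 < m)%nat -> psi (x ^+ m) = 0 -> psi x = 0.
Proof.
  intros Hx Hm E. rewrite homX in E by exact Hx.
  apply Rmult_integral in E as [E | E]; [| exact E].
  exfalso. apply (not_0_INR m); [lia | exact E].
Qed.

Lemma conj_kernel_normal :
  normal_subgroup mul e inv H -> normal_subgroup mul e inv (conj_kernel H psi).
Proof.
  intros HN. pose proof HN as [_ [_ [_ Hconj]]].
  split; [| split; [| split]].
  - split; [apply HH |]. intros g. now rewrite mulg1, mulgV, hom1.
  - intros x y [Hx Kx] [Hy Ky]. split; [now apply HH |]. intros g.
    rewrite conjMg, Hpsi, Kx, Ky by auto. ring.
  - intros x [Hx Kx]. split; [now apply HH |]. intros g.
    rewrite conjVg, homV, Kx by auto. ring.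
  - intros g h [Hh Kh]. split; [now apply Hconj |]. intros g'.
    rewrite conjgJ. apply Kh.
Qed.

End Hom.

Section Words.

Variable S : list G.

Local Notation word := (is_word inv S).
Local Notation ev := (eval_word mul e).

Lemma eval_word_app w1 w2 : ev (w1 ++ w2) = ev w1 · ev w2.
Proof.
  unfold eval_word. induction w1 as [|a w1 IH]; simpl; [now rewrite mul1g |].
  now rewrite IH, mulA.
Qed.

Lemma is_word_app w1 w2 : word w1 -> word w2 -> word (w1 ++ w2).
Proof. intros. now apply Forall_app. Qed.

Lemma word_gpow w k :
  word w -> exists w', word w' /\ ev w' = ev w ^+ k /\ length w' = (k * length w)%nat.
Proof.
  intros Hw. induction k as [|k [w' [Hw' [Ew' Lw']]]].
  { exists nil. split; [constructor | split; reflexivity]. }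
  exists (w ++ w'). split; [now apply is_word_app |].
  now rewrite eval_word_app, length_app, Ew', Lw'.
Qed.

Definition distorted (x : G) : Prop :=
  forall eps, 0 < eps -> forall N0, exists N w, (N0 <= N)%nat /\ word w /\
    ev w = x ^+ N /\ INR (length w) <= eps * INR N.

Lemma distortion_element_distorted u :
  distortion_element mul e inv S u -> distorted u.
Proof.
  intros [_ Hd] eps Heps N0.
  destruct (Hd eps Heps N0) as [N [l [HN [HN0 [[[w [Hw [Ew Lw]]] _] Hr]]]]].
  exists N, w. repeat split; auto. rewrite Lw.
  assert (0 < INR N) by (apply lt_0_INR; exact HN0).
  apply Rlt_le. apply (Rmult_lt_reg_r (/ INR N)); [now apply Rinv_0_lt_compat |].
  now rewrite Rmult_assoc, Rinv_r, Rmult_1_r by lra.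
Qed.

Lemma distorted_gpow x k : distorted x -> distorted (x ^+ k).
Proof.
  intros Hx eps Heps N0.
  assert (Hk : 0 < INR k + 1) by (pose proof (pos_INR k); lra).
  destruct (Hx (eps / (INR k + 1)) ltac:(apply Rdiv_lt_0_compat; lra) N0)
    as [N [w [HN [Hw [Ew Lw]]]]].
  destruct (word_gpow k Hw) as [w' [Hw' [Ew' Lw']]].
  exists N, w'. repeat split; auto.
  - now rewrite Ew', Ew, <- !gpowM, Nat.mul_comm.
  - rewrite Lw', mult_INR.
    assert (Hkeps : INR k * (eps / (INR k + 1)) <= eps).
    { apply (Rmult_le_reg_r (INR k + 1)); [exact Hk |].
      replace (INR k * (eps / (INR k + 1)) * (INR k + 1)) with (INR k * eps)
        by (field; lra).
      lra. }
    pose proof (pos_INR k). pose proof (pos_INR N).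
    apply Rle_trans with (INR k * (eps / (INR k + 1) * INR N)).
    + now apply Rmult_le_compat_l.
    + rewrite <- Rmult_assoc. now apply Rmult_le_compat_r.
Qed.

Lemma distorted_conj g x :
  generates mul e inv S -> distorted x -> distorted (g · x · inv g).
Proof.
  intros HS Hx eps Heps N0.
  destruct (HS g) as [wg [Hwg Ewg]], (HS (inv g)) as [wg' [Hwg' Ewg']].
  destruct (INR_archimed (eps / 2) (INR (length wg + length wg')))
    as [N1 HN1]; [lra |].
  destruct (Hx (eps / 2) ltac:(lra) (max N0 N1)) as [N [w [HN [Hw [Ew Lw]]]]].
  exists N, (wg ++ w ++ wg'). repeat split.
  - lia.
  - now repeat apply is_word_app.
  - now rewrite !eval_word_app, Ewg, Ew, Ewg', conjXg, mulA.
  - assert (INR N1 <= INR N) by (apply le_INR; lia).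
    rewrite !length_app, !plus_INR. rewrite plus_INR in HN1. nra.
Qed.

Lemma coset_word_bound H psi l (rep comp : G -> G) :
  subgroup H -> hom_to_R mul H psi ->
  (forall g, In (rep g) l /\ H (comp g) /\ g = rep g · comp g) ->
  exists A B, forall w, word w -> exists t h, In t l /\ H h /\ ev w = t · h /\
    Rabs (psi h) <= A + B * INR (length w).
Proof.
  intros HH Hpsi Hdec.
  destruct (list_upper_bound (fun p => Rabs (psi (comp (fst p · snd p))))
              (list_prod (S ++ map inv S) l)) as [B [_ HB]].
  exists (Rabs (psi (comp e))), B.
  induction w as [|s w IH]; intros Hw.
  - exists (rep e), (comp e). destruct (Hdec e) as [? [? ?]].
    repeat split; auto. simpl. lra.
  - apply Forall_cons_iff in Hw as [Hs Hw].
    destruct (IH Hw) as [t [h [Ht [Hh [Ew Hb]]]]].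
    destruct (Hdec (s · t)) as [Hr [Hc Est]].
    assert (Hst : In (s, t) (list_prod (S ++ map inv S) l)).
    { apply in_prod; [| exact Ht]. apply in_or_app.
      destruct Hs as [Hs | Hs]; [now left | right].
      rewrite <- (invgK s). now apply in_map. }
    specialize (HB _ Hst). simpl in HB.
    exists (rep (s · t)), (comp (s · t) · h). repeat split; auto.
    + now apply HH.
    + change (ev (s :: w)) with (s · ev w).
      now rewrite Ew, mulA, Est at 1; rewrite <- mulA.
    + rewrite Hpsi by auto. simpl length. rewrite S_INR.
      pose proof (Rabs_triang (psi (comp (s · t))) (psi h)). lra.
Qed.

Lemma hom_word_length_bound H psi :
  subgroup H -> finite_index mul H -> hom_to_R mul H psi ->
  exists C B, 0 <= B /\ forall w, word w -> H (ev w) ->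
    Rabs (psi (ev w)) <= C + B * INR (length w).
Proof.
  intros HH Hfi Hpsi.
  destruct (finite_index_transversal Hfi) as [l [rep [comp Hdec]]].
  destruct (coset_word_bound HH Hpsi Hdec) as [A [B HAB]].
  destruct (list_upper_bound (fun t => Rabs (psi t)) l) as [Cl [_ HCl]].
  exists (Cl + A), (Rabs B). split; [apply Rabs_pos |].
  intros w Hw Hev. destruct (HAB w Hw) as [t [h [Ht [Hh [Ew Hb]]]]].
  assert (Htin : H t).
  { replace t with (ev w · inv h) by (now rewrite Ew, <- mulA, mulgV, mulg1).
    now apply HH; [| apply HH]. }
  rewrite Ew, Hpsi by auto.
  pose proof (Rabs_triang (psi t) (psi h)). pose proof (HCl t Ht).
  pose proof (Rle_abs B). pose proof (pos_INR (length w)).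
  assert (B * INR (length w) <= Rabs B * INR (length w))
    by (now apply Rmult_le_compat_r). lra.
Qed.

Lemma distorted_hom_vanish H psi x :
  subgroup H -> finite_index mul H -> hom_to_R mul H psi ->
  H x -> distorted x -> psi x = 0.
Proof.
  intros HH Hfi Hpsi Hx Hdist.
  destruct (hom_word_length_bound HH Hfi Hpsi) as [C [B [HB0 Hb]]].
  destruct (Req_dec (psi x) 0) as [| Hc]; [assumption | exfalso].
  set (a := Rabs (psi x)).
  assert (Ha : 0 < a) by now apply Rabs_pos_lt.
  set (eps := a / (2 * (B + 1))).
  assert (Heps : 0 < eps) by (apply Rdiv_lt_0_compat; lra).
  assert (HBeps : B * eps <= a / 2).
  { apply (Rmult_le_reg_r (2 * (B + 1))); [lra |].
    replace (B * eps * (2 * (B + 1))) with (B * a) by (unfold eps; field; lra).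
    replace (a / 2 * (2 * (B + 1))) with (B * a + a) by field. lra. }
  destruct (INR_archimed a (2 * C) Ha) as [N0 HN0].
  destruct (Hdist eps Heps N0) as [N [w [HN [Hw [Ew Lw]]]]].
  assert (Hgrowth : INR N * a <= C + B * INR (length w)).
  { assert (Hev : H (ev w)) by (rewrite Ew; now apply subgroupX).
    pose proof (Hb w Hw Hev) as Hbw.
    now rewrite Ew, (homX HH Hpsi), Rabs_mult, Rabs_pos_eq in Hbw by (auto using pos_INR). }
  assert (INR N0 <= INR N) by now apply le_INR.
  assert (B * INR (length w) <= B * (eps * INR N)) by now apply Rmult_le_compat_l.
  pose proof (pos_INR N). nra.
Qed.

End Words.

End Group.

Theorem lemma7p2 (G : Type) (mul : G -> G -> G) (e : G) (inv : G -> G)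
  (Hgrp : is_group mul e inv)
  (S : list G) (HS : generates mul e inv S)
  (Halmost : almost_simple mul e inv)
  (u : G) (Hu : distortion_element mul e inv S u)
  (H : G -> Prop) (HN : normal_subgroup mul e inv H)
  (psi : G -> R) (Hpsi : hom_to_R mul H psi) :
  forall x, H x -> psi x = 0.
Proof.
  pose proof (normal_subgroup_subgroup HN) as HH.
  pose proof (conj_kernel_normal Hgrp HH Hpsi HN) as HK.
  pose proof (normal_subgroup_subgroup HK) as HKsub.
  destruct (Halmost H HN) as [Hfin | Hfi].
  - intros x Hx.
    destruct (finite_subgroup_torsion Hgrp HH Hfin Hx) as [m [Hm Hxm]].
    apply (homX_eq0 Hgrp HH Hpsi Hx Hm). rewrite Hxm. exact (hom1 Hgrp HH Hpsi).
  - destruct (Halmost _ HK) as [Kfin | Kfi].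
    + exfalso.
      destruct (finite_index_gpow Hgrp u HH Hfi) as [k [Hk Huk]].
      assert (Kv : conj_kernel mul inv H psi (gpow mul e u k)).
      { split; [exact Huk |]. intros g.
        apply (distorted_hom_vanish Hgrp (S := S) HH Hfi Hpsi); [now apply HN |].
        apply (distorted_conj Hgrp _ HS), distorted_gpow,
          distortion_element_distorted; assumption. }
      destruct (finite_subgroup_torsion Hgrp HKsub Kfin Kv) as [m [Hm Hvm]].
      apply (proj1 Hu (m * k)%nat); [nia |].
      now rewrite (gpowM Hgrp).
    + intros x Hx.
      destruct (finite_index_gpow Hgrp x HKsub Kfi) as [m [Hm [_ Kxm]]].
      apply (homX_eq0 Hgrp HH Hpsi Hx Hm).
      specialize (Kxm e). now rewrite (mul_1l Hgrp), (invg1 Hgrp), (mul_1r Hgrp) in Kxm.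
Qed.
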